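(* The following are equivalent: (1) $b=0$; (2) either $R$ is Gorenstein (i.e. $r=1$), or $v(R)=\{0,e,2e,\dots,pe\}\cup\{m\in\mathbb Z:m\ge(p+1)e\}$ for some integer $p$; (3) the type sequence of $R$ is $[r,\dots,r]$.
   Context: Let $(R,\mathfrak m)$ be a one-dimensional local Noetherian domain with quotient field $K$, not regular, analytically irreducible (the integral closure $\overline R$ of $R$ in $K$ is a DVR and a finite $R$-module) and residually rational. Let $v$ be the valuation of $\overline R$ normalized so a uniformizer has value 1, $v(R)=\{v(a):a\in R\setminus\{0\}\}$, $c$ the least element of $v(R)$ with $c+\mathbb N\subseteq v(R)$, $\delta=\ell_R(\overline R/R)$, $r=\ell_R((R:_K\mathfrak m)/R)$, $b=(c-\delta)r-\delta$, $e$ the least positive element of $v(R)$, $n=c-\delta$. Write $v(R)=\{s_0=0<s_1<\cdots\}$, $R_i=\{a\in R:v(a)\ge s_i\}$, $r_i=\ell_R((R:_KR_i)/(R:_KR_{i-1}))$; the type sequence is $[r_1,\dots,r_n]$. *)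

From mathcomp Require Import all_boot all_order all_algebra.
Set Implicit Arguments. Unset Strict Implicit. Unset Printing Implicit Defensive.
Import Order.TTheory GRing.Theory Num.Theory.
Local Open Scope ring_scope.

Section Defs.
Variable K : fieldType.
Implicit Types (R M N I P : K -> Prop).

Definition subring R :=
  R 0 /\ R 1 /\ (forall x y, R x -> R y -> R (x - y)) /\
  (forall x y, R x -> R y -> R (x * y)).

Definition submod R M :=
  M 0 /\ (forall x y, M x -> M y -> M (x + y)) /\
  (forall a x, R a -> M x -> M (a * x)).

Definition is_ideal R I := submod R I /\ (forall x, I x -> R x).

Definition rspan R (s : seq K) : K -> Prop := fun x =>
  exists c : nat -> K, (forall i, R (c i)) /\ x = \sum_(i < size s) c i * s`_i.

Definition maxideal R : K -> Prop := fun a => R a /\ ~ (a != 0 /\ R a^-1).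

Definition is_local R := forall x y, maxideal R x -> maxideal R y -> maxideal R (x + y).

Definition noetherian R :=
  forall I, is_ideal R I -> exists s : seq K,
    (forall x, x \in s -> I x) /\ (forall x, I x <-> rspan R s x).

Definition prime_ideal R P :=
  is_ideal R P /\ ~ P 1 /\
  (forall a b, R a -> R b -> P (a * b) -> P a \/ P b).

Definition strict_incl (P Q : K -> Prop) :=
  (forall x, P x -> Q x) /\ exists x, Q x /\ ~ P x.

Definition krull_dim_one R :=
  (exists P Q, prime_ideal R P /\ prime_ideal R Q /\ strict_incl P Q) /\
  ~ (exists P Q S, prime_ideal R P /\ prime_ideal R Q /\ prime_ideal R S /\
        strict_incl P Q /\ strict_incl Q S).

Definition is_quotient_field R :=
  forall x, exists a b, R a /\ R b /\ b != 0 /\ x = a / b.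

Definition intcl R : K -> Prop := fun x =>
  exists p : {poly K}, p \is monic /\ (forall i, R p`_i) /\ root p x.

(* v is a normalized discrete valuation of K (values on nonzero elements) *)
Definition normalized_dvaluation (v : K -> int) :=
  (forall x y, x != 0 -> y != 0 -> v (x * y) = v x + v y) /\
  (forall x y, x != 0 -> y != 0 -> x + y != 0 -> Num.min (v x) (v y) <= v (x + y)) /\
  (exists t, t != 0 /\ v t = 1).

(* regular = the maximal ideal is principal (R has dimension one) *)
Definition regular R :=
  exists t, forall x, maxideal R x <-> exists a, R a /\ x = a * t.

Definition strict_chain R N M (n : nat) (f : nat -> K -> Prop) :=
  (forall x, f 0%N x <-> N x) /\ (forall x, f n x <-> M x) /\
  (forall i, (i <= n)%N -> submod R (f i)) /\
  (forall i, (i < n)%N -> strict_incl (f i) (f i.+1)).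

Definition length_eq R N M (n : nat) :=
  (exists f, strict_chain R N M n f) /\
  (forall k f, strict_chain R N M k f -> (k <= n)%N).

Definition colon R I : K -> Prop := fun x => forall a, I a -> R (x * a).

Definition valR R (v : K -> int) : nat -> Prop := fun k =>
  exists a, R a /\ a != 0 /\ v a = k%:Z.

Definition is_conductor (S : nat -> Prop) (c : nat) :=
  S c /\ (forall k, S (c + k)%N) /\
  (forall c', S c' -> (forall k, S (c' + k)%N) -> (c <= c')%N).

Definition is_multiplicity (S : nat -> Prop) (e : nat) :=
  S e /\ (0 < e)%N /\ (forall k, S k -> (0 < k)%N -> (e <= k)%N).

(* x = s_i, the i-th element (from 0) of S in increasing order *)
Definition is_sval (S : nat -> Prop) (i x : nat) :=
  S x /\ exists l : seq nat, uniq l /\ size l = i /\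
    (forall k, k \in l <-> (S k /\ (k < x)%N)).

Definition Rsub R (v : K -> int) (i : nat) : K -> Prop := fun a =>
  R a /\ (a = 0 \/ exists x, is_sval (valR R v) i x /\ x%:Z <= v a).

End Defs.

From mathcomp Require Import all_boot all_order all_algebra.
From mathcomp Require Import boolp zify.
Import Order.TTheory GRing.Theory Num.Theory.
Set Implicit Arguments. Unset Strict Implicit. Unset Printing Implicit Defensive.

(* Every [R]-module [M] with [t^c Rbar ⊆ M ⊆ Rbar] is determined, up to [t^c Rbar], by its
   values below the conductor [c], and lengths of such modules are differences of the numbers of
   these values.  Hence [delta = c - n] with [n = #(v(R) ∩ [0, c))] and [r] counts the values of
   [(R : m)] below [c] that are not in [v(R)].  Along [R = (R : R_0) ⊆ ... ⊆ (R : R_n)] the number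
   of values grows from [n] to [c], and each step has length between [1] and [r], since
   multiplication by an element of value [s_(i-1)] embeds [(R : R_i)/(R : R_(i-1))] into [(R : m)/R].
   So [c <= n + n r], i.e. [b >= 0], with equality iff every step has length [r], which is (3).
   For (2): when [r = 1] every step is [1], and for the stair semigroup [c = (p + 1) e], [n = p + 1]
   and [r = e - 1].  Conversely, if every step is [r], the values missing from the two top
   modules of the filtration show that, unless [r = 1], the last element of [v(R)] below [c] is
   [c - e] and nothing of [v(R)] lies strictly between them, which forces the stair shape. *)

Section Counting.
Implicit Types (s : seq nat) (P Q : pred nat).

Lemma sub_in_count s P Q : (forall k, k \in s -> P k -> Q k) -> count P s <= count Q s.
Proof.
elim: s => //= a s IH PQ; apply: leq_add; last by apply: IH => k ks; apply: PQ; rewrite inE ks orbT.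
by case Pa: (P a) => //; rewrite (PQ a) ?mem_head.
Qed.

Lemma sub_in_count_lt s P Q : (forall k, k \in s -> P k -> Q k) ->
  (exists k, [/\ k \in s, Q k & ~~ P k]) -> count P s < count Q s.
Proof.
elim: s => [_ [k []]|a s IH PQ [k [ks Qk nPk]]] //=.
have PQs : forall k, k \in s -> P k -> Q k by move=> j js; apply: PQ; rewrite inE js orbT.
move: ks; rewrite inE => /orP [/eqP ka|ks].
  by subst; rewrite Qk (negbTE nPk) add0n add1n ltnS sub_in_count.
have := IH PQs (ex_intro _ k (And3 ks Qk nPk)).
case Pa: (P a); first by rewrite (PQ a) ?mem_head.
by case: (Q a) => /=; rewrite ?add0n ?add1n // => /leqW.
Qed.

Lemma count_predU1 s P Q k0 : uniq s -> k0 \in s -> ~~ P k0 ->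
  (forall k, k \in s -> Q k = P k || (k == k0)) -> count Q s = (count P s).+1.
Proof.
elim: s => //= a s IH /andP [aNs us]; rewrite inE => /orP [/eqP ka|ks] nPk QPk.
  subst a; rewrite QPk ?mem_head // eqxx orbT (negbTE nPk) add1n add0n; congr S.
  apply: eq_in_count => j js; rewrite QPk ?inE ?js ?orbT //.
  by case: eqP => [jk|]; [subst; move: aNs; rewrite js|rewrite orbF].
have ak : a != k0 by apply: contraNneq aNs => ->.
rewrite QPk ?mem_head // (negbTE ak) orbF IH ?addnS // => j js.
by apply: QPk; rewrite inE js orbT.
Qed.

Lemma count_split s P Q : (forall k, k \in s -> P k -> Q k) ->
  count Q s = count P s + count (fun k => Q k && ~~ P k) s.
Proof.
elim: s => //= a s IH PQ; rewrite IH => [|k ks]; last by apply: PQ; rewrite inE ks orbT.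
case Pa: (P a); first by rewrite (PQ a) ?mem_head //=; lia.
by case: (Q a) => /=; lia.
Qed.

Lemma count_itv a b c : a <= b <= c -> count (fun k => a <= k < b) (iota 0 c) = b - a.
Proof.
have gen n : count (fun k => a <= k < b) (iota 0 n) = minn b n - minn a n.
  elim: n => [|n IH]; first by rewrite !minn0.
  rewrite -addn1 iotaD count_cat /= add0n addn0 IH.
  by case: (leqP a n) => h1; case: (ltnP n b) => h2 /=; lia.
by rewrite gen; lia.
Qed.

Lemma count_dvdn e q : 0 < e -> count (fun k => e %| k) (iota 0 (q * e)) = q.
Proof.
case: e => // e _; elim: q => [|q IH]; first by rewrite mul0n.
rewrite mulSnr iotaD count_cat IH add0n /= dvdn_mull //.
rewrite (eq_in_count (a2 := pred0)) ?count_pred0 ?addn1 // => k; rewrite mem_iota.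
case/andP=> lo hi /=; apply/negbTE/negP => /dvdnP [j kj].
have : q < j by rewrite -(ltn_pmul2r (ltn0Sn e)) -kj.
have : j < q.+1 by rewrite -(ltn_pmul2r (ltn0Sn e)) -kj mulSn; lia.
lia.
Qed.

Lemma ex_max_below (P : nat -> Prop) c : (exists k, k < c /\ P k) ->
  exists k, [/\ k < c, P k & forall j, k < j -> j < c -> ~ P j].
Proof.
elim: c => [[k []]|c IH [k [kc Pk]]] //.
case: (EM (P c)) => Pc; first by exists c; split => // j cj jc; lia.
have kc' : k < c by move: kc; rewrite ltnS leq_eqVlt => /orP [/eqP kc|] //; subst.
have [j [jc Pj jmax]] := IH (ex_intro _ k (conj kc' Pk)).
exists j; split => //; first exact: ltnW.
by move=> i ji; rewrite ltnS leq_eqVlt => /orP [/eqP ->|]; [|apply: jmax].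
Qed.

End Counting.

Section Telescope.
Variables (F : nat -> nat) (n r : nat).
Hypothesis stepF : forall i, 0 < i <= n -> F i <= F i.-1 + r.

Lemma telescope_le j : j <= n -> F j <= F 0 + j * r.
Proof.
elim: j => [|j IH] jn; first by rewrite mul0n addn0.
have := stepF (i := j.+1); rewrite ltn0Sn jn mulSn => /(_ isT) /=; have := IH (ltnW jn); lia.
Qed.

Lemma telescope_ge k : k <= n -> F n <= F (n - k) + k * r.
Proof.
elim: k => [|k IH] kn; first by rewrite subn0 mul0n addn0.
have := stepF (i := n - k); rewrite subn_gt0 kn leq_subr => /(_ isT).
have -> : (n - k).-1 = n - k.+1 by lia.
by have := IH (ltnW kn); rewrite mulSn; lia.
Qed.

Lemma telescope_eqP : F n = F 0 + n * r <-> (forall i, 0 < i <= n -> F i = F i.-1 + r).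
Proof.
split=> [Fn i /andP [i0 iN]|steps].
  have lo := telescope_le (leq_trans (leq_pred i) iN).
  have hi := telescope_ge (leq_subr i n); rewrite subKn // in hi.
  have := stepF (i := i); rewrite i0 iN => /(_ isT).
  have : i * r = i.-1 * r + r by rewrite -{1}(prednK i0) mulSn addnC.
  have : n * r = i * r + (n - i) * r by rewrite -mulnDl subnKC.
  by lia.
suff Fj j : j <= n -> F j = F 0 + j * r by apply: Fj.
elim: j => [|j IH] jn; first by rewrite mul0n addn0.
by rewrite steps ?ltn0Sn ?jn // IH ?(ltnW jn) // mulSn; lia.
Qed.

End Telescope.

Section Nbelow.
Variable S : nat -> Prop.

(* [nbelow S x] is the number of elements of [S] below [x]; for a numerical semigroup and
   [x] in [S] it is the index [i] with [x = s_i]. *)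
Definition nbelow (x : nat) : nat := count (fun k => `[< S k >]) (iota 0 x).

Lemma nbelowS x : nbelow x.+1 = nbelow x + `[< S x >].
Proof. by rewrite /nbelow -addn1 iotaD count_cat /= addn0 add0n. Qed.

Lemma nbelow_mono x y : x <= y -> nbelow x <= nbelow y.
Proof.
move=> /subnK <-; elim: (y - x) => [|k IH] //; rewrite addSn nbelowS.
exact: leq_trans IH (leq_addr _ _).
Qed.

Lemma nbelow_lt x y : S x -> x < y -> nbelow x < nbelow y.
Proof.
move=> Sx xy; apply: leq_trans (nbelow_mono xy).
by rewrite nbelowS; case: asboolP => // _; rewrite addn1.
Qed.

Lemma ltn_of_nbelow x y : nbelow x < nbelow y -> x < y.
Proof. by apply: contraTT; rewrite -!leqNgt => /nbelow_mono. Qed.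

Lemma nbelow_inj x y : S x -> S y -> nbelow x = nbelow y -> x = y.
Proof.
move=> Sx Sy e; case: (ltngtP x y) => // h.
- by have := nbelow_lt Sx h; rewrite e ltnn.
- by have := nbelow_lt Sy h; rewrite e ltnn.
Qed.

Lemma nbelow_next x y z : S x -> S z -> nbelow y = (nbelow x).+1 -> x < z -> y <= z.
Proof.
move=> Sx Sz hy xz; rewrite leqNgt; apply/negP => zy.
by have := nbelow_lt Sz zy; have := nbelow_lt Sx xz; rewrite hy; lia.
Qed.

Lemma nbelow_surj c : (forall k, c <= k -> S k) -> forall i, exists x, S x /\ nbelow x = i.
Proof.
move=> Sge i.
have hj j : j <= nbelow (c + j).
  elim: j => [|j IH] //; rewrite addnS nbelowS.
  case: asboolP => [_|[]]; last by apply/Sge/leq_addr.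
  by rewrite addn1 ltnS.
have hex : exists x, i < nbelow x.+1 by exists (c + i); rewrite -addnS; apply: hj.
case: (ex_minnP hex) => x ix xmin.
have xi : nbelow x <= i.
  case: x ix xmin => [|x] // _ xmin.
  by rewrite leqNgt; apply/negP => /xmin; rewrite ltnn.
move: ix; rewrite nbelowS; case: asboolP => [Sx|_]; last by rewrite addn0 ltnNge xi.
by rewrite addn1 ltnS => ix; exists x; split => //; apply/eqP; rewrite eqn_leq xi ix.
Qed.

Lemma is_svalP i x : is_sval S i x <-> S x /\ nbelow x = i.
Proof.
have memE k : k \in [seq k <- iota 0 x | `[< S k >]] = `[< S k >] && (k < x).
  by rewrite mem_filter mem_iota add0n.
have uniqF : uniq [seq k <- iota 0 x | `[< S k >]] by apply/filter_uniq/iota_uniq.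
split=> [[Sx [l [ul [sl hl]]]]|[Sx e]]; split => //.
  rewrite -sl /nbelow -size_filter; apply/esym/perm_size/uniq_perm => // k.
  rewrite memE; apply/idP/idP => [/hl [Sk kx]|/andP [/asboolP Sk kx]]; last exact/hl.
  by rewrite kx andbT; apply/asboolP.
exists [seq k <- iota 0 x | `[< S k >]]; split => //; split; first by rewrite size_filter.
by move=> k; rewrite memE; split => [/andP [/asboolP]|[Sk kx]] //; rewrite kx andbT; apply/asboolP.
Qed.

End Nbelow.

Lemma nbelow_sub (S T : nat -> Prop) x : (forall k, S k -> T k) -> nbelow S x <= nbelow T x.
Proof. by move=> ST; apply: sub_in_count => k _ /asboolP /ST /asboolP. Qed.

Lemma nbelow_compl (S : nat -> Prop) c : c - nbelow S c = count (fun k => ~~ `[< S k >]) (iota 0 c).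
Proof.
have := count_predC (fun k => `[< S k >]) (iota 0 c).
by rewrite size_iota /nbelow => {1}<-; rewrite addKn.
Qed.

Lemma conductor_valR (S : nat -> Prop) c : is_conductor S c -> forall k, c <= k -> S k.
Proof. by move=> [_ [Sck _]] k /subnK <-; rewrite addnC. Qed.

Lemma conductor_pred (S : nat -> Prop) c : is_conductor S c -> 0 < c -> ~ S c.-1.
Proof.
move=> [_ [Sck cmin]] c0 Sc1.
suff : c <= c.-1 by lia.
apply: cmin => // -[|k]; first by rewrite addn0.
by rewrite -addSnnS prednK.
Qed.

Definition stair_shape (S : nat -> Prop) (e p : nat) :=
  forall m, S m <-> (exists k, k <= p /\ m = k * e) \/ p.+1 * e <= m.

Section StairShape.
Variables (S : nat -> Prop) (c e p : nat).
Hypotheses (hc : is_conductor S c) (c0 : 0 < c) (e0 : 0 < e).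
Hypothesis shapeS : stair_shape S e p.

Lemma stair_e_gt1 : 1 < e.
Proof.
rewrite ltnNge; apply/negP => e_le1; have e1 : e = 1 by lia.
apply: (conductor_pred hc c0); apply/shapeS; rewrite e1 !muln1.
by case: (leqP c.-1 p) => cp; [left; exists c.-1; rewrite muln1|right].
Qed.

Lemma stair_conductor : c = p.+1 * e.
Proof.
have [_ [_ cmin]] := hc; have e1 := stair_e_gt1.
apply/eqP; rewrite eqn_leq cmin; first last.
- by move=> k; apply/shapeS; right; apply: leq_addr.
- by apply/shapeS; right.
rewrite leqNgt; apply/negP => lt.
have /shapeS [[k [kp ke]]|] : S (p.+1 * e).-1 by apply: (conductor_valR hc); lia.
  by have := leq_mul kp (leqnn e); move: ke; rewrite mulSn; lia.
by rewrite mulSn; lia.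
Qed.

Lemma stair_nbelow : nbelow S c = p.+1.
Proof.
rewrite /nbelow stair_conductor (eq_in_count (a2 := fun k => e %| k)) ?count_dvdn // => k.
rewrite mem_iota add0n => /andP [_ kc]; apply/asboolP/idP => [/shapeS|/dvdnP [j kj]].
  by case=> [[j [_ ->]]|]; [apply: dvdn_mull|lia].
apply/shapeS; left; exists j; split=> //.
by rewrite -ltnS -(ltn_pmul2r e0) -kj.
Qed.

End StairShape.

(* If [c - e] is the last element of [S] below [c], every element [z < c] of [S] reaches [c - e]
   by adding multiples of [e]; with [0] in [S] this forces [S] to consist of multiples of [e]
   below [c]. *)
Lemma stair_of_gap (S : nat -> Prop) c e : S 0 -> (forall a b, S a -> S b -> S (a + b)) ->
  is_conductor S c -> 0 < c -> S e -> 0 < e -> e <= c -> S (c - e) ->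
  (forall k, c - e < k < c -> ~ S k) -> stair_shape S e (c.-1 %/ e).
Proof.
move=> S0 SD hc c0 Se e0 ec Sce gap.
have SMn q : S (q * e) by elim: q => [|q IH]; rewrite ?mul0n ?mulSn //; apply: SD.
have toward z : S z -> z < c -> z + (c.-1 - z) %/ e * e = c - e.
  move=> Sz zc; have /andP [lo hi] : c - e <= z + (c.-1 - z) %/ e * e < c by lia.
  move: lo; rewrite leq_eqVlt => /orP [/eqP -> //|lo].
  by case: (gap _ (introT andP (conj lo hi))); apply: SD.
have := toward 0 S0 c0; rewrite add0n subn0 => ceE.
move=> m; split=> [Sm|[[k [kp ->]]|hm]]; last 2 first.
- exact: SMn.
- by apply: (conductor_valR hc); move: hm; rewrite mulSn ceE; lia.
case: (ltnP m c) => mc; last by right; rewrite mulSn ceE; lia.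
left; exists (c.-1 %/ e - (c.-1 - m) %/ e); split; first exact: leq_subr.
by rewrite mulnBl; have := toward m Sm mc; lia.
Qed.

Local Open Scope ring_scope.

Section Valuation.
Variables (K : fieldType) (v : K -> int).
Hypothesis hv : normalized_dvaluation v.

Lemma dvalM x y : x != 0 -> y != 0 -> v (x * y) = v x + v y.
Proof. by case: hv => + _; apply. Qed.

Lemma dval1 : v 1 = 0.
Proof.
have one0 : (1 : K) != 0 by rewrite oner_eq0.
by have := dvalM one0 one0; rewrite mulr1; lia.
Qed.

Lemma dvalV x : x != 0 -> v x^-1 = - v x.
Proof. by move=> x0; apply/eqP; rewrite -addr_eq0 addrC -dvalM ?invr_neq0 // mulfV // dval1. Qed.

Lemma dvalN x : v (- x) = v x.
Proof.
have m10 : (-1 : K) != 0 by rewrite oppr_eq0 oner_neq0.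
have vm1 : v (-1) = 0.
  by have := dvalM m10 m10; rewrite mulrNN mulr1 dval1; lia.
have [->|x0] := eqVneq x 0; first by rewrite oppr0.
by rewrite -mulN1r dvalM // vm1 add0r.
Qed.

Lemma dvalD_ge (m : int) x y : x + y != 0 -> m <= v x -> m <= v y -> m <= v (x + y).
Proof.
move=> s0 hx hy; have [->|x0] := eqVneq x 0; first by rewrite add0r.
have [->|y0] := eqVneq y 0; first by rewrite addr0.
by case: hv => _ [+ _] => /(_ x y x0 y0 s0); apply: le_trans; rewrite le_min hx hy.
Qed.

Lemma dvalD_lt x y : x != 0 -> y != 0 -> v x < v y -> x + y != 0 /\ v (x + y) = v x.
Proof.
move=> x0 y0 lt.
have s0 : x + y != 0.
  by apply: contraTneq lt => /eqP; rewrite addr_eq0 => /eqP ->; rewrite dvalN ltxx.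
split=> //; apply/eqP; rewrite eq_le (dvalD_ge s0 (lexx _) (ltW lt)) andbT.
have ny0 : - y != 0 by rewrite oppr_eq0.
case: hv => _ [+ _] => /(_ _ _ s0 ny0); rewrite addrK dvalN => /(_ x0).
by rewrite ge_min => /orP [//|]; rewrite leNgt lt.
Qed.

Lemma dvalX x (k : nat) : x != 0 -> v (x ^+ k) = k%:Z * v x.
Proof.
move=> x0; elim: k => [|k IH]; first by rewrite expr0 dval1 mul0r.
by rewrite exprS dvalM ?expf_neq0 // IH intS mulrDl mul1r.
Qed.

Lemma dval_surj (k : int) : exists y, y != 0 /\ v y = k.
Proof.
case: (hv) => _ [_ [t [t0 vt]]].
case: k => n.
  by exists (t ^+ n); rewrite expf_neq0 // dvalX // vt mulr1.
exists (t ^+ n.+1)^-1; rewrite invr_neq0 ?expf_neq0 //.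
by rewrite dvalV ?expf_neq0 // dvalX // vt mulr1 NegzE.
Qed.

End Valuation.

Section Subring.
Variables (K : fieldType) (R : K -> Prop).
Hypothesis hs : subring R.

Lemma sr0 : R 0.
Proof. by case: hs. Qed.

Lemma sr1 : R 1.
Proof. by case: hs => _ []. Qed.

Lemma srB x y : R x -> R y -> R (x - y).
Proof. by case: hs => _ [_ [hB _]]; apply: hB. Qed.

Lemma srM x y : R x -> R y -> R (x * y).
Proof. by case: hs => _ [_ [_ hM]]; apply: hM. Qed.

Lemma srN x : R x -> R (- x).
Proof. by move=> Rx; rewrite -sub0r; apply: srB => //; apply: sr0. Qed.

Lemma srD x y : R x -> R y -> R (x + y).
Proof. by move=> Rx Ry; rewrite -[y]opprK; apply: srB => //; apply: srN. Qed.

Lemma srX x (n : nat) : R x -> R (x ^+ n).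
Proof. by move=> Rx; elim: n => [|n IH]; rewrite ?expr0 ?exprS; [apply: sr1|apply: srM]. Qed.

Lemma sr_sum (I : Type) (r : seq I) (P : pred I) (F : I -> K) :
  (forall i, P i -> R (F i)) -> R (\sum_(i <- r | P i) F i).
Proof. by move=> RF; apply: (big_ind R) => //; [apply: sr0|apply: srD]. Qed.

Lemma subring_submod : submod R R.
Proof. by split; [apply: sr0|split; [apply: srD|apply: srM]]. Qed.

Lemma submodB M a x y : submod R M -> R a -> M x -> M y -> M (x - a * y).
Proof.
by move=> [_ [MD MM]] Ra Mx My; rewrite -mulNr; apply: MD => //; apply: MM => //; apply: srN.
Qed.

Lemma colon_submod I : submod R (colon R I).
Proof.
split; first by move=> a _; rewrite mul0r; apply: sr0.
split=> [x y hx hy a Ia|b x Rb hx a Ia]; first by rewrite mulrDl; apply/srD; [apply: hx|apply: hy].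
by rewrite -mulrA; apply: srM => //; apply: hx.
Qed.

Lemma subring_colon (I : K -> Prop) : (forall a, I a -> R a) -> forall y, R y -> colon R I y.
Proof. by move=> IR y Ry a Ia; apply: srM => //; apply: IR. Qed.

Lemma common_denominator (hq : is_quotient_field R) (s : seq K) :
  exists b, [/\ R b, b != 0 & forall i, (i < size s)%N -> R (b * s`_i)].
Proof.
elim: s => [|x s [b [Rb b0 Rbs]]]; first by exists 1; split; [apply: sr1|apply: oner_neq0|].
have [p [q [Rp [Rq [q0 ->]]]]] := hq x.
exists (b * q); split; [exact: srM|by rewrite mulf_neq0|].
case=> [|i] /= hi; first by rewrite -mulrA [q * _]mulrC mulfVK //; apply: srM.
by rewrite mulrAC; apply: srM => //; apply: Rbs.
Qed.

(* A monic relation [y^(d+1) + sum_i p_i y^i = 0] for [y = a^-1] gives, after multiplying by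
   [a^d], [y = - sum_i p_i a^(d-i)]. *)
Lemma intcl_inv a : R a -> a != 0 -> intcl R a^-1 -> R a^-1.
Proof.
move=> Ra a0 [p [mp [Rp rp]]]; set y := a^-1 in rp *.
have ya : y * a = 1 by rewrite mulVf.
have lc : lead_coef p = 1 by apply/monicP.
have sz : (1 < size p)%N.
  rewrite ltnNge; apply/negP => /size1_polyC pC.
  by move: rp lc; rewrite /root pC hornerC lead_coefC => /eqP -> /eqP; rewrite eq_sym oner_eq0.
move: rp lc; rewrite /root horner_coef /lead_coef.
case: (size p) sz => [|[|d]] // _; rewrite big_ord_recr /= => /eqP rp lc.
have /(congr1 (fun z => z * a ^+ d)) := rp.
rewrite lc mul1r mul0r mulrDl exprS -mulrA -exprMn ya expr1n mulr1 mulr_suml.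
have aE (i : 'I_d.+1) : p`_i * y ^+ i * a ^+ d = p`_i * a ^+ (d - i).
  rewrite -mulrA; congr (_ * _); move: (nat_of_ord i) (ltn_ord i) => j; rewrite ltnS => jd.
  by rewrite -{1}(subnK jd) exprD mulrCA -exprMn ya expr1n mulr1.
under eq_bigr => i _ do rewrite aE.
move=> /eqP; rewrite addrC addr_eq0 => /eqP ->.
by apply/srN/sr_sum => i _; apply: srM => //; apply: srX.
Qed.

End Subring.

(* [val_ideal v N] is the ideal [t^N Rbar] of the valuation ring [Rbar = val_ideal v 0]. *)
Definition val_ideal (K : fieldType) (v : K -> int) (N : nat) : K -> Prop :=
  fun x => x = 0 \/ N%:Z <= v x.

(* [R] is analytically irreducible and residually rational, [v] being the valuation of the
   DVR [Rbar]. *)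
Record ai_ring (K : fieldType) (R : K -> Prop) (v : K -> int) : Prop := AIRing {
  ai_subring : subring R;
  ai_val : normalized_dvaluation v;
  ai_intcl : forall x, intcl R x <-> (x = 0 \/ 0 <= v x);
  ai_residue : forall x, intcl R x -> exists a, R a /\ (x - a = 0 \/ 1 <= v (x - a)) }.

Section AnalyticallyIrreducible.
Variables (K : fieldType) (R : K -> Prop) (v : K -> int).
Hypothesis ai : ai_ring R v.
Local Notation hs := (ai_subring ai).
Local Notation hv := (ai_val ai).

Lemma ring_val_ge0 x : R x -> x = 0 \/ 0 <= v x.
Proof.
move=> Rx; apply/(ai_intcl ai); exists ('X - x%:P); split; first exact: monicXsubC.
split; last by rewrite /root hornerXsubC subrr.
move=> [|[|i]]; rewrite coefB coefX coefC /= ?sub0r ?subr0 ?oppr0.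
- exact: (srN hs Rx).
- exact: sr1 hs.
- exact: sr0 hs.
Qed.

Lemma ring_val_nat a : R a -> a != 0 -> exists k : nat, v a = k%:Z /\ valR R v k.
Proof.
move=> Ra a0; case: (ring_val_ge0 Ra) => [a0'|va]; first by rewrite a0' eqxx in a0.
by exists `|v a|%N; rewrite gez0_abs //; split=> //; exists a; rewrite gez0_abs.
Qed.

Lemma maxideal_val_ge1 a : maxideal R a -> a != 0 -> 1 <= v a.
Proof.
move=> [Ra nunit] a0; have [k [vk _]] := ring_val_nat Ra a0; rewrite vk.
case: k vk => // vk; case: nunit; split=> //.
by apply: (intcl_inv hs) => //; apply/(ai_intcl ai); right; rewrite (dvalV hv) // vk.
Qed.

Lemma maxideal_of_val a : R a -> val_ideal v 1 a -> maxideal R a.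
Proof.
move=> Ra va; split=> // [[a0 Rai]].
case: va => [a0'|va]; first by rewrite a0' eqxx in a0.
case: (ring_val_ge0 Rai) => [|]; first by move/eqP; rewrite invr_eq0 (negbTE a0).
by rewrite (dvalV hv) //; lia.
Qed.

Lemma val_ideal_submod N : submod R (val_ideal v N).
Proof.
split; first by left.
split=> [x y|a x Ra].
  case=> [->|hx]; first by rewrite add0r.
  case=> [->|hy]; first by rewrite addr0; right.
  by have [->|s0] := eqVneq (x + y) 0; [left|right; apply: (dvalD_ge hv)].
case=> [->|hx]; first by rewrite mulr0; left.
have [->|a0] := eqVneq a 0; first by rewrite mul0r; left.
have [->|x0] := eqVneq x 0; first by rewrite mulr0; left.
right; rewrite (dvalM hv) //; case: (ring_val_ge0 Ra) => [a0'|]; first by rewrite a0' eqxx in a0.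
by lia.
Qed.

(* Residual rationality: [x/y] lies in [Rbar], so it is congruent to some [a] in [R] modulo the
   maximal ideal of [Rbar]. *)
Lemma residue_approx x y : x != 0 -> y != 0 -> v y <= v x ->
  exists a, R a /\ (x = a * y \/ x - a * y != 0 /\ v y < v (x - a * y)).
Proof.
move=> x0 y0 yx.
have z0 : x / y != 0 by rewrite mulf_neq0 ?invr_neq0.
have : intcl R (x / y).
  by apply/(ai_intcl ai); right; rewrite (dvalM hv) ?invr_neq0 // (dvalV hv) //; lia.
move=> /(ai_residue ai) [a [Ra ha]]; exists a; split => //.
have xE : x - a * y = y * (x / y - a) by rewrite mulrBr mulrCA mulfV // mulr1 mulrC.
have [za|za] := eqVneq (x / y - a) 0.
  by left; apply/eqP; rewrite -subr_eq0 xE za mulr0.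
right; rewrite xE mulf_neq0 // (dvalM hv) //; split=> //.
by case: ha => [za'|h]; [rewrite za' eqxx in za|rewrite ltrDl; apply: lt_le_trans h].
Qed.

(* Values of [I] that already occur in [J] can be subtracted off, raising the valuation one step at
   a time until [t^N Rbar], which lies in [J], is reached. *)
Lemma sub_of_vals N (I J : K -> Prop) : submod R I -> submod R J ->
  (forall x, J x -> I x) -> (forall x, I x -> x = 0 \/ 0 <= v x) ->
  (forall x, val_ideal v N x -> J x) ->
  (forall k, (k < N)%N -> valR I v k -> valR J v k) ->
  forall x, I x -> J x.
Proof.
move=> sI [J0 [JD JM]] JI Ige0 NJ IJvals.
suff key m x : I x -> x != 0 -> (N - m)%:Z <= v x -> J x.
  move=> x Ix; have [->|x0] := eqVneq x 0; first exact: J0.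
  by apply: (key N) => //; rewrite subnn; case: (Ige0 x Ix) => // x0'; rewrite x0' eqxx in x0.
elim: m x => [|m IH] x Ix x0 hx; first by apply: NJ; right; rewrite subn0 in hx.
have [|lt] := boolP ((N - m)%:Z <= v x); first exact: IH.
case: (Ige0 x Ix) => [x0'|]; first by rewrite x0' eqxx in x0.
case vx: (v x) hx lt => [k|//] hx lt _.
have [y [Jy [y0 vy]]] : valR J v k by apply: IJvals; [lia|exists x].
have [a [Ra [->|[d0 hd]]]] : exists a, R a /\ (x = a * y \/ x - a * y != 0 /\ v y < v (x - a * y)).
  by apply: residue_approx => //; rewrite vx vy.
  exact: JM.
rewrite -(subrK (a * y) x); apply: JD; last exact: JM.
have vyN : (N - m)%:Z <= v y + 1 by rewrite vy; lia.
by apply: IH => //; [apply: (submodB hs sI Ra Ix (JI _ Jy))|apply: le_trans vyN _; rewrite lezD1].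
Qed.

Lemma exists_val_ideal_sub : is_quotient_field R ->
  (exists s : seq K, forall x, intcl R x <-> rspan R s x) ->
  exists N : nat, forall x, val_ideal v N x -> R x.
Proof.
move=> hq [s spanE]; have [b [Rb b0 Rbs]] := common_denominator hs hq s.
have [N [vb _]] := ring_val_nat Rb b0.
exists N => x [->|hx]; first exact: sr0 hs.
have [->|x0] := eqVneq x 0; first exact: sr0 hs.
have : intcl R (x / b).
  by apply/(ai_intcl ai); right; rewrite (dvalM hv) ?invr_neq0 // (dvalV hv) // vb; lia.
move=> /spanE [cf [Rcf xE]]; rewrite -(mulfVK b0 x) mulrC xE mulr_sumr.
by apply: (sr_sum hs) => i _; rewrite mulrCA; apply: (srM hs) => //; apply: Rbs.
Qed.

Lemma conductor_sub c : is_conductor (valR R v) c ->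
  (exists N : nat, forall x, val_ideal v N x -> R x) -> forall x, val_ideal v c x -> R x.
Proof.
move=> [_ [Sck _]] [N NR] x cx.
pose J := fun x => R x /\ val_ideal v c x.
have [I0 [ID IM]] := val_ideal_submod c.
have sJ : submod R J.
  split; first by split; [exact: sr0 hs|left].
  split=> [x1 x2 [Rx1 cx1] [Rx2 cx2]|a x1 Ra [Rx1 cx1]]; split; first exact: (srD hs).
  - exact: ID.
  - exact: (srM hs).
  - exact: IM.
suff : J x by case.
apply: (sub_of_vals (N := maxn N c) (val_ideal_submod c) sJ) => //.
- by move=> y [].
- by move=> y [->|]; [left|right; lia].
- by move=> y [->|hy]; split; [exact: sr0 hs|left|apply: NR; right; lia|right; lia].
move=> k _ [y [[->|cy] [y0 vy]]]; first by rewrite eqxx in y0.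
have ck : (c <= k)%N by rewrite vy in cy; lia.
have [z [Rz [z0 vz]]] := Sck (k - c)%N; rewrite subnKC // in vz.
by exists z; split=> //; split=> //; right; rewrite vz.
Qed.

Lemma conductor_gt0 c : (forall x, val_ideal v c x -> R x) -> ~ regular R -> (0 < c)%N.
Proof.
case: c => // cR []; have [t [t0 vt]] := dval_surj hv 1.
exists t => x; split=> [mx|[a [Ra ->]]].
  have [->|x0] := eqVneq x 0; first by exists 0; rewrite mul0r; split=> //; apply: sr0 hs.
  have := maxideal_val_ge1 mx x0; exists (x / t); rewrite mulfVK //; split=> //.
  by apply: cR; right; rewrite (dvalM hv) ?invr_neq0 // (dvalV hv) // vt; lia.
apply: maxideal_of_val; first by apply: (srM hs) => //; apply: cR; right; rewrite vt.
have [->|a0] := eqVneq a 0; first by left; rewrite mul0r.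
by right; rewrite (dvalM hv) // vt; case: (ring_val_ge0 Ra) => [a0'|]; [rewrite a0' eqxx in a0|lia].
Qed.

End AnalyticallyIrreducible.

Lemma chain_mono (K : fieldType) (R N M : K -> Prop) n f : strict_chain R N M n f ->
  forall i j, (i <= j <= n)%N -> forall x, f i x -> f j x.
Proof.
move=> [_ [_ [_ fst]]] i j /andP [ij jn]; elim: j ij jn => [|j IH] ij jn x fx.
  by move: ij; rewrite leqn0 => /eqP e; subst.
move: ij; rewrite leq_eqVlt => /orP [/eqP e|ij]; first by subst.
by apply: (proj1 (fst j jn)); apply: IH => //; apply: ltnW.
Qed.

Lemma length_eq_uniq (K : fieldType) (R N M : K -> Prop) a b :
  length_eq R N M a -> length_eq R N M b -> a = b.
Proof. by move=> [[f hf] ha] [[g hg] hb]; apply/eqP; rewrite eqn_leq (hb _ _ hf) (ha _ _ hg). Qed.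

Definition sandwiched (K : fieldType) (R : K -> Prop) (v : K -> int) (c : nat) (M : K -> Prop) :=
  [/\ submod R M, (forall x, M x -> x = 0 \/ 0 <= v x) & (forall x, val_ideal v c x -> M x)].

Definition nvals (K : fieldType) (v : K -> int) (c : nat) (M : K -> Prop) : nat :=
  nbelow (valR M v) c.

Section Lengths.
Variables (K : fieldType) (R : K -> Prop) (v : K -> int) (c : nat).
Hypothesis ai : ai_ring R v.
Local Notation hv := (ai_val ai).
Implicit Types (I J M : K -> Prop).

Lemma valR_sub I J : (forall x, J x -> I x) -> forall k, valR J v k -> valR I v k.
Proof. by move=> JI k [x [Jx rest]]; exists x; split => //; apply: JI. Qed.

Lemma nvals_le I J : (forall x, J x -> I x) -> (nvals v c J <= nvals v c I)%N.
Proof. by move=> JI; apply/nbelow_sub/valR_sub. Qed.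

Lemma nvals_ext I J : (forall x, J x <-> I x) -> nvals v c J = nvals v c I.
Proof. by move=> JI; apply/eqP; rewrite eqn_leq !nvals_le // => x /JI. Qed.

Lemma sandwiched_ext M M' : (forall x, M x <-> M' x) -> sandwiched R v c M -> sandwiched R v c M'.
Proof.
move=> MM' [[M0 [MD MM]] Mge0 cM]; split.
- split; first exact/MM'.
  by split=> [x y /MM' Mx /MM' My|a x Ra /MM' Mx]; apply/MM'; [apply: MD|apply: MM].
- by move=> x /MM'; apply: Mge0.
- by move=> x /cM /MM'.
Qed.

Lemma sandwiched_between I J M : sandwiched R v c J -> sandwiched R v c I -> submod R M ->
  (forall x, J x -> M x) -> (forall x, M x -> I x) -> sandwiched R v c M.
Proof. by move=> [_ _ cJ] [_ Ige0 _] sM JM MI; split=> // x; [move/MI/Ige0|move/cJ/JM]. Qed.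

Lemma sandwiched_sub I J : sandwiched R v c J -> sandwiched R v c I -> (forall x, J x -> I x) ->
  (forall k, (k < c)%N -> valR I v k -> valR J v k) -> forall x, I x -> J x.
Proof. by move=> [sJ _ cJ] [sI Ige0 _] JI; apply: (sub_of_vals ai sI sJ). Qed.

Lemma sandwiched_new_val I J : sandwiched R v c J -> sandwiched R v c I ->
  (forall x, J x -> I x) -> (exists x, I x /\ ~ J x) ->
  exists k, (k < c)%N /\ (valR I v k /\ ~ valR J v k).
Proof.
move=> gJ gI JI [x [Ix nJx]].
case: (EM (exists k, (k < c)%N /\ (valR I v k /\ ~ valR J v k))) => // nex.
case: nJx; apply: (sandwiched_sub gJ gI JI) Ix => k kc Ik.
by case: (EM (valR J v k)) => // nJk; case: nex; exists k.
Qed.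

Lemma nvals_lt I J : sandwiched R v c J -> sandwiched R v c I -> (forall x, J x -> I x) ->
  (exists x, I x /\ ~ J x) -> (nvals v c J < nvals v c I)%N.
Proof.
move=> gJ gI JI /(sandwiched_new_val gJ gI JI) [k [kc [Ik nJk]]].
apply: sub_in_count_lt => [j _ /asboolP Jj|]; first by apply/asboolP; apply: valR_sub Jj.
by exists k; split; [rewrite mem_iota|apply/asboolP|apply/negP => /asboolP].
Qed.

Lemma length_le_nvals I J : sandwiched R v c J -> sandwiched R v c I -> (forall x, J x -> I x) ->
  forall k f, strict_chain R J I k f -> (k <= nvals v c I - nvals v c J)%N.
Proof.
move=> gJ gI JI k f hf; have [f0 [fk [fsub fst]]] := hf.
have gf i : (i <= k)%N -> sandwiched R v c (f i).
  move=> ik; apply: (sandwiched_between gJ gI (fsub i ik)) => x fx.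
    by apply: (chain_mono hf (i := 0)) => //; apply/f0.
  by apply/fk; apply: (chain_mono hf (i := i)) fx; rewrite ik leqnn.
suff nvf i : (i <= k)%N -> (nvals v c J + i <= nvals v c (f i))%N.
  by have := nvf k (leqnn k); rewrite (nvals_ext (I := I) (J := f k)) //; lia.
elim: i => [|i IH] ik; first by rewrite addn0 (nvals_ext (I := f 0) (J := J)) // => x; split=> /f0.
have [sub ex] := fst i ik.
by rewrite addnS; apply: leq_ltn_trans (IH (ltnW ik)) (nvals_lt (gf i (ltnW ik)) (gf i.+1 ik) sub ex).
Qed.

Definition join_above I J k : K -> Prop :=
  fun x => exists y z, [/\ J y, I z, val_ideal v k z & x = y + z].

Lemma join_above_submod I J k : submod R I -> submod R J -> submod R (join_above I J k).
Proof.
move=> [I0 [ID IM]] [J0 [JD JM]]; have [K0 [KD KM]] := val_ideal_submod ai k.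
split; first by exists 0, 0; split; rewrite ?addr0.
split=> [x1 x2 [y1 [z1 [Jy1 Iz1 kz1 ->]]] [y2 [z2 [Jy2 Iz2 kz2 ->]]]|a x Ra [y [z [Jy Iz kz ->]]]].
  by exists (y1 + y2), (z1 + z2); split; [apply: JD|apply: ID|apply: KD|rewrite addrACA].
by exists (a * y), (a * z); split; [apply: JM|apply: IM|apply: KM|rewrite mulrDr].
Qed.

Lemma join_above_val_lt I J k j : (j < k)%N -> valR (join_above I J k) v j -> valR J v j.
Proof.
move=> jk [x [[y [z [Jy Iz kz xE]]] [x0 vx]]]; exists y; split=> //.
have [z0|z0] := eqVneq z 0; first by move: xE x0 vx; rewrite z0 addr0 => <-.
case: kz => [z0'|kz]; first by rewrite z0' eqxx in z0.
have nz0 : - z != 0 by rewrite oppr_eq0.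
have lt : v x < v (- z) by rewrite (dvalN hv) vx; lia.
have yE : y = x + - z by rewrite xE addrK.
by have [y0 vy] := dvalD_lt hv x0 nz0 lt; rewrite yE vy vx.
Qed.

(* Adjoining the elements of [I] of valuation at least [k], the largest value of [I] below [c]
   missing from [J], adds exactly the one value [k] below [c]. *)
Lemma sandwiched_extend I J : sandwiched R v c J -> sandwiched R v c I ->
  (forall x, J x -> I x) -> (exists x, I x /\ ~ J x) ->
  exists J', [/\ sandwiched R v c J', (forall x, J x -> J' x), (forall x, J' x -> I x),
    (exists x, J' x /\ ~ J x) & nvals v c J' = (nvals v c J).+1].
Proof.
move=> gJ gI JI /(sandwiched_new_val gJ gI JI) ex.
have [k [kc [Ik nJk] kmax]] := ex_max_below ex.
have [sJ _ _] := gJ; have [sI _ _] := gI; have [J0 _] := sJ; have [I0 [ID _]] := sI.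
set J' := join_above I J k.
have JJ' x : J x -> J' x by exists x, 0; split; [|exact: I0|left|rewrite addr0].
have J'I x : J' x -> I x by case=> y [z [Jy Iz _ ->]]; apply: ID => //; apply: JI.
have [z [Iz [z0 vz]]] := Ik.
have J'z : J' z by exists 0, z; split; [exact: J0|exact: Iz|right; rewrite vz|rewrite add0r].
have vJ' j : (j < c)%N -> valR J' v j = (valR J v j \/ j = k).
  move=> jc; apply/propext; split=> [J'j|[/(valR_sub JJ')|->]] //; last by exists z.
  have [jk|kj] := ltnP j k; first by left; apply: join_above_val_lt J'j.
  move: kj; rewrite leq_eqVlt => /orP [/eqP ->|kj]; [by right|left].
  by case: (EM (valR J v j)) => // nJj; case: (kmax j kj jc); split=> //; apply: valR_sub J'j.
exists J'; split=> //.
- exact: (sandwiched_between gJ gI (join_above_submod k sI sJ)).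
- by exists z; split=> // Jz; apply: nJk; exists z.
apply: (count_predU1 (k0 := k)); [exact: iota_uniq|by rewrite mem_iota|by apply/negP => /asboolP|].
move=> j; rewrite mem_iota add0n => /andP [_ jc].
rewrite vJ' //; apply/idP/idP => [/asboolP [/asboolP -> //|->]|/orP [/asboolP Jj|/eqP ->]].
- by rewrite eqxx orbT.
- by apply/asboolP; left.
- by apply/asboolP; right.
Qed.

Lemma nvals_chain I : sandwiched R v c I -> forall m J, sandwiched R v c J -> (forall x, J x -> I x) ->
  (nvals v c I - nvals v c J)%N = m -> exists f, strict_chain R J I m f.
Proof.
move=> gI; elim=> [|m IH] J gJ JI hm.
  have IJ x : I x -> J x.
    move=> Ix; case: (EM (J x)) => // nJx.
    by have := nvals_lt gJ gI JI (ex_intro _ x (conj Ix nJx)); lia.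
  exists (fun=> J); split=> //; split; first by move=> x; split=> [/JI|/IJ].
  by split=> // i _; case: gJ.
have newI : exists x, I x /\ ~ J x.
  case: (EM (exists x, I x /\ ~ J x)) => // nex.
  suff : (nvals v c I <= nvals v c J)%N by lia.
  by apply: nvals_le => x Ix; case: (EM (J x)) => // nJx; case: nex; exists x.
have [J' [gJ' JJ' J'I newJ' nJ']] := sandwiched_extend gJ gI JI newI.
have nJ'm : (nvals v c I - nvals v c J')%N = m by rewrite nJ' subnS hm.
have [f [f0 [fm [fsub fst]]]] := IH J' gJ' J'I nJ'm.
exists (fun i => if i is i'.+1 then f i' else J); split=> //; split=> //.
split; first by case=> [_|i /fsub]; [case: gJ|].
case=> [_|i /fst] //=; split=> [x Jx|]; first by apply/f0/JJ'.
by case: newJ' => y [J'y nJy]; exists y; split => //; apply/f0.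
Qed.

Lemma length_eq_nvals I J : sandwiched R v c J -> sandwiched R v c I -> (forall x, J x -> I x) ->
  length_eq R J I (nvals v c I - nvals v c J).
Proof.
move=> gJ gI JI; split; first exact: nvals_chain.
exact: length_le_nvals.
Qed.

Lemma sandwiched_vring : sandwiched R v c (val_ideal v 0).
Proof. by split; [exact: (val_ideal_submod ai 0)|by []|move=> x [->|cx]; [left|right; lia]]. Qed.

Lemma nvals_vring : nvals v c (val_ideal v 0) = c.
Proof.
rewrite /nvals /nbelow (eq_in_count (a2 := predT)) ?count_predT ?size_iota // => k _.
by apply/asboolP; have [y [y0 vy]] := dval_surj hv k; exists y; split; [right; rewrite vy|].
Qed.

End Lengths.

Arguments nvals_le {K v c I J}.
Arguments nvals_ext {K v c I J}.

Section ValueSemigroup.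
Variables (K : fieldType) (R : K -> Prop) (v : K -> int).
Hypothesis ai : ai_ring R v.
Local Notation hs := (ai_subring ai).
Local Notation hv := (ai_val ai).

Lemma valR0 : valR R v 0.
Proof. by exists 1; split; [apply: sr1 hs|split; [apply: oner_neq0|rewrite (dval1 hv)]]. Qed.

Lemma valRD a b : valR R v a -> valR R v b -> valR R v (a + b).
Proof.
move=> [x [Rx [x0 vx]]] [y [Ry [y0 vy]]]; exists (x * y).
by split; [apply: (srM hs)|split; [rewrite mulf_neq0|rewrite (dvalM hv) // vx vy]].
Qed.

Lemma valRMn e q : valR R v e -> valR R v (q * e).
Proof. by move=> Se; elim: q => [|q IH]; [rewrite mul0n; apply: valR0|rewrite mulSn; apply: valRD]. Qed.

End ValueSemigroup.

Section Conductor.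
Variables (K : fieldType) (R : K -> Prop) (v : K -> int) (c e : nat).
Hypotheses (ai : ai_ring R v) (hc : is_conductor (valR R v) c).
Hypotheses (cR : forall x, val_ideal v c x -> R x) (c0 : (0 < c)%N).
Hypothesis he : is_multiplicity (valR R v) e.
Local Notation hs := (ai_subring ai).
Local Notation hv := (ai_val ai).
Local Notation S := (valR R v).
Local Notation n := (nbelow S c).

Lemma valR_conductor : S c.
Proof. exact: conductor_valR hc c (leqnn c). Qed.

Lemma e_gt0 : (0 < e)%N.
Proof. by case: he => _ []. Qed.

Lemma e_le_c : (e <= c)%N.
Proof. by case: he => _ [_ emin]; apply: emin valR_conductor c0. Qed.

Lemma sval_exists i : exists x, S x /\ nbelow S x = i.
Proof. exact/nbelow_surj/(conductor_valR hc). Qed.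

Lemma sval_le_c x : (nbelow S x <= n)%N -> (x <= c)%N.
Proof. by apply: contraTT; rewrite -!ltnNge; apply: nbelow_lt valR_conductor. Qed.

Lemma RsubE i x : S x -> nbelow S x = i -> forall a, Rsub R v i a <-> R a /\ val_ideal v x a.
Proof.
move=> Sx xi a; rewrite /Rsub /val_ideal.
have xE x' : is_sval S i x' -> x' = x.
  by move=> /is_svalP [Sx' x'i]; apply: nbelow_inj Sx' Sx _; rewrite x'i xi.
split=> -[Ra va]; split=> //; case: va => [a0|va]; [by left| |by left|].
  by case: va => x' [/xE -> le]; right.
by right; exists x; split=> //; apply/is_svalP.
Qed.

Lemma val_ideal_Rsub i : (i <= n)%N -> forall a, val_ideal v c a -> Rsub R v i a.
Proof.
move=> i_n a ca; have [x [Sx xi]] := sval_exists i.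
apply/(RsubE Sx xi); split; first exact: cR.
have xc : (x <= c)%N by apply: sval_le_c; rewrite xi.
by case: ca => [->|ca]; [left|right; lia].
Qed.

(* If [v y = - m - 1 < 0], the elements [y t^(c + j)] of [R] would make [c - m - 1] a
   smaller conductor. *)
Lemma colon_vring I : (forall x, val_ideal v c x -> I x) -> forall y, colon R I y -> y = 0 \/ 0 <= v y.
Proof.
move=> cI y Iy; have [->|y0] := eqVneq y 0; first by left.
right; rewrite leNgt; apply/negP => yneg.
have [m vy] : exists m : nat, v y = - (m.+1)%:Z by case: (v y) yneg => // m _; exists m; rewrite NegzE.
have yval j : valR R v (c + j - m.+1).
  have [z [z0 vz]] := dval_surj hv (c + j)%N.
  have Ryz : R (y * z) by apply: Iy; apply: cI; right; rewrite vz; lia.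
  have yz0 : y * z != 0 by rewrite mulf_neq0.
  have vyz : v (y * z) = (c + j)%N%:Z - (m.+1)%:Z by rewrite (dvalM hv) // vy vz addrC.
  case: (ring_val_ge0 ai Ryz) => [yz0'|]; first by rewrite yz0' eqxx in yz0.
  by rewrite vyz => ge; exists (y * z); do 2!split=> //; rewrite vyz; lia.
have mc : (m.+1 <= c)%N.
  have [z [z0 vz]] := dval_surj hv c.
  have Ryz : R (y * z) by apply: Iy; apply: cI; right; rewrite vz; lia.
  case: (ring_val_ge0 ai Ryz) => [/eqP|]; first by rewrite mulf_eq0 (negbTE y0) (negbTE z0).
  by rewrite (dvalM hv) // vy vz; lia.
have Sk k : valR R v (c - m.+1 + k) by rewrite addnBAC //; apply: yval.
have S0' : valR R v (c - m.+1) by rewrite -[(c - m.+1)%N]addn0; apply: Sk.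
by case: hc => _ [_ /(_ _ S0' Sk)]; lia.
Qed.

Local Notation A i := (colon R (Rsub R v i)).
Local Notation M := (colon R (maxideal R)).
Local Notation typ := (nvals v c M - nvals v c R)%N.

Lemma sandwiched_colon I : (forall x, val_ideal v c x -> I x) -> (forall x, I x -> R x) ->
  sandwiched R v c (colon R I).
Proof.
move=> cI IR; split; [exact: (colon_submod hs I)|exact: colon_vring|].
by move=> x /cR Rx; apply: (subring_colon hs IR Rx).
Qed.

Lemma sandwiched_ring : sandwiched R v c R.
Proof. by split; [exact: subring_submod hs|exact: ring_val_ge0 ai|exact: cR]. Qed.

Lemma sandwiched_A i : (i <= n)%N -> sandwiched R v c (A i).
Proof. by move=> i_n; apply: sandwiched_colon => [|a []//]; apply: val_ideal_Rsub. Qed.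

Lemma sandwiched_M : sandwiched R v c M.
Proof.
apply: sandwiched_colon => [x cx|x []//]; apply: (maxideal_of_val ai); first exact: cR.
by case: cx => [->|cx]; [left|right; lia].
Qed.

Lemma ring_sub_M y : R y -> M y.
Proof. by apply: (subring_colon hs) => a []. Qed.

Lemma ring_sub_A i y : R y -> A i y.
Proof. by apply: (subring_colon hs) => a []. Qed.

Lemma A_mono i : (0 < i)%N -> forall y, A i.-1 y -> A i y.
Proof.
move=> i0 y Ay a; have [x [Sx xi]] := sval_exists i; have [x' [Sx' x'i]] := sval_exists i.-1.
move/(RsubE Sx xi) => [Ra va]; apply/Ay/(RsubE Sx' x'i); split=> //.
have : (x' < x)%N by apply: (@ltn_of_nbelow S); rewrite xi x'i prednK.
by case: va => [->|va]; [left|right; lia].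
Qed.

Lemma nvals_A0 : nvals v c (A 0) = n.
Proof.
rewrite (nvals_ext (I := R)) // => y; split=> [Ay|]; last exact: ring_sub_A.
rewrite -[y]mulr1; apply: Ay; apply/(RsubE (valR0 ai) (erefl _)).
by split; [exact: sr1 hs|right; rewrite (dval1 hv)].
Qed.

Lemma nvals_An : nvals v c (A n) = c.
Proof.
rewrite /nvals /nbelow (eq_in_count (a2 := predT)) ?count_predT ?size_iota // => k _.
apply/asboolP; have [y [y0 vy]] := dval_surj hv k; exists y; split=> //.
move=> a /(RsubE valR_conductor (erefl _)) [Ra [->|va]]; first by rewrite mulr0; apply: sr0 hs.
apply: cR; have [->|a0] := eqVneq a 0; first by left; rewrite mulr0.
by right; rewrite (dvalM hv) // vy; lia.
Qed.

Definition mul_add (F : K -> Prop) (x : K) : K -> Prop :=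
  fun w => exists y a, [/\ F y, R a & w = y * x + a].

Lemma mul_add_submod F x : submod R F -> submod R (mul_add F x).
Proof.
move=> [F0 [FD FM]]; split; first by exists 0, 0; split; [|exact: sr0 hs|rewrite mul0r addr0].
split=> [w1 w2 [y1 [a1 [f1 Ra1 ->]]] [y2 [a2 [f2 Ra2 ->]]]|b w Rb [y [a [fy Ra ->]]]].
  by exists (y1 + y2), (a1 + a2); split; [apply: FD|apply: (srD hs)|rewrite mulrDl addrACA].
by exists (b * y), (b * a); split; [apply: FM|apply: (srM hs)|rewrite mulrDr mulrA].
Qed.

Lemma mul_add_strict I J F F' x : submod R I -> submod R F ->
  (forall y, J y -> F y) -> (forall y, F' y -> I y) -> (forall y, I y -> R (y * x) -> J y) ->
  strict_incl F F' -> strict_incl (mul_add F x) (mul_add F' x).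
Proof.
move=> sI [_ [FD _]] JF F'I IRJ [FF' [y [F'y nFy]]].
split=> [w [y' [a [Fy' Ra ->]]]|]; first by exists y', a; split=> //; apply: FF'.
exists (y * x); split; first by exists y, 0; split=> //; [apply: sr0 hs|rewrite addr0].
case=> y' [a [Fy' Ra yE]]; have Iy' := F'I _ (FF' _ Fy').
apply: nFy; rewrite -(subrK y' y); apply: FD Fy'; apply: JF.
apply: IRJ; last by rewrite mulrBl yE addrAC subrr add0r.
by rewrite -[y']mul1r; apply: (submodB hs sI (sr1 hs)) Iy'; apply: F'I.
Qed.

(* Multiplication by [x] embeds [I/J] into [B/R]: a chain [f j] from [J] to [I] is carried to
   the chain [f j * x + R] from [R] to a submodule of [B]. *)
Lemma length_mul_le I J B x : sandwiched R v c J -> sandwiched R v c I -> sandwiched R v c B ->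
  (forall y, J y -> I y) -> (forall y, R y -> B y) ->
  (forall y, I y -> B (y * x)) -> (forall y, J y -> R (y * x)) ->
  (forall y, I y -> R (y * x) -> J y) ->
  (nvals v c I - nvals v c J <= nvals v c B - nvals v c R)%N.
Proof.
move=> gJ gI gB JI RB IB JR IRJ; set m := (nvals v c I - nvals v c J)%N.
have [[f hf] _] := length_eq_nvals ai gJ gI JI; have [f0 [fm [fsub fst]]] := hf.
have fI j : (j <= m)%N -> forall y, f j y -> I y.
  by move=> jm y fy; apply/fm; apply: (chain_mono hf (i := j)) fy; rewrite jm leqnn.
have Jf j : (j <= m)%N -> forall y, J y -> f j y.
  by move=> jm y /f0 fy; apply: (chain_mono hf (i := 0)) fy.
have [[J0 _] _ _] := gJ; have [sI _ _] := gI; have [[_ [BD _]] _ _] := gB.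
pose g j := mul_add (f j) x.
have Rg j w : (j <= m)%N -> R w -> g j w.
  by move=> jm Rw; exists 0, w; split; [exact: Jf jm _ J0|done|rewrite mul0r add0r].
have gB' w : g m w -> B w by case=> y [a [fy Ra ->]]; apply: BD; [apply/IB/(fI m)|apply: RB].
have hg : strict_chain R R (g m) m g.
  split=> [w|]; first split=> [[y [a [fy Ra ->]]]|]; [by apply: (srD hs _ Ra); apply/JR/f0|exact: Rg|].
  split=> //; split=> [j jm|j jm]; first exact/mul_add_submod/fsub.
  apply: (mul_add_strict sI (fsub j (ltnW jm)) (Jf j (ltnW jm)) (fI j.+1 jm) IRJ).
  exact: fst.
have Rgm w : R w -> g m w := Rg m w (leqnn m).
have gm := sandwiched_between sandwiched_ring gB (mul_add_submod x (fsub m (leqnn m))) Rgm gB'.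
apply: leq_trans (length_le_nvals ai sandwiched_ring gm Rgm hg) _.
by apply: leq_sub2r; apply: nvals_le gB'.
Qed.

Section Step.
Variables (i x : nat) (xx : K).
Hypotheses (i0 : (0 < i)%N) (i_n : (i <= n)%N) (xi : nbelow S x = i.-1).
Hypotheses (Rxx : R xx) (xx0 : xx != 0) (vxx : v xx = x).

Let Sx : S x. Proof. by exists xx. Qed.

Let next_sval : exists x', [/\ S x', nbelow S x' = i & forall z, S z -> (x < z)%N -> (x' <= z)%N].
Proof.
have [x' [Sx' x'i]] := sval_exists i; exists x'; split=> // z Sz; apply: nbelow_next Sx Sz _.
by rewrite x'i xi prednK.
Qed.

Lemma maxideal_mul_Rsub a : maxideal R a -> Rsub R v i (a * xx).
Proof.
move=> ma; have [x' [Sx' x'i x'min]] := next_sval; apply/(RsubE Sx' x'i).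
split; first by apply: (srM hs) Rxx; case: ma.
have [->|a0] := eqVneq a 0; first by left; rewrite mul0r.
have [k [vk Sk]] := ring_val_nat ai ma.1 a0.
have := maxideal_val_ge1 ai ma a0; rewrite vk => k1.
have : (x' <= x + k)%N by apply: x'min (valRD ai Sx Sk) _; lia.
by right; rewrite (dvalM hv) // vk vxx; lia.
Qed.

Lemma Rsub_pred_split z : Rsub R v i.-1 z -> exists a, R a /\ Rsub R v i (z - a * xx).
Proof.
have [x' [Sx' x'i x'min]] := next_sval.
have Rsub0 : Rsub R v i 0 by apply/(RsubE Sx' x'i); split; [apply: sr0 hs|left].
move=> /(RsubE Sx xi) [Rz vz]; have [z0|z0] := eqVneq z 0.
  by exists 0; split; [apply: sr0 hs|rewrite z0 mul0r subr0].
have vxz : v xx <= v z by case: vz => [z0'|]; [rewrite z0' eqxx in z0|rewrite vxx].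
have [a [Ra [zE|[d0 vd]]]] := residue_approx ai z0 xx0 vxz; exists a; split=> //.
  by rewrite zE subrr.
apply/(RsubE Sx' x'i); split; first by apply: (srB hs) => //; apply: (srM hs).
have [k [vk Sk]] := ring_val_nat ai (srB hs Rz (srM hs Ra Rxx)) d0.
by right; rewrite vk; apply: x'min Sk _; rewrite vk vxx in vd; lia.
Qed.

Lemma step_le_type : (nvals v c (A i) - nvals v c (A i.-1) <= typ)%N.
Proof.
have i'_n : (i.-1 <= n)%N by apply: leq_trans (leq_pred i) i_n.
apply: (length_mul_le (x := xx) (sandwiched_A i'_n) (sandwiched_A i_n) sandwiched_M (A_mono i0)).
- exact: ring_sub_M.
- by move=> y Ay a ma; rewrite -mulrA [xx * a]mulrC; apply: Ay; apply: maxideal_mul_Rsub.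
- by move=> y Ay; apply: Ay; apply/(RsubE Sx xi); split=> //; right; rewrite vxx.
move=> y Ay Ryx z /Rsub_pred_split [a [Ra Rd]].
by rewrite -(subrK (a * xx) z) mulrDr mulrCA; apply: (srD hs); [apply: Ay|apply: (srM hs)].
Qed.

End Step.

Lemma nvals_A_step_le i : (0 < i <= n)%N -> (nvals v c (A i) <= nvals v c (A i.-1) + typ)%N.
Proof.
case/andP=> i0 i_n; have [x [[xx [Rxx [xx0 vxx]]] xi]] := sval_exists i.-1.
have := step_le_type i0 i_n xi Rxx xx0 vxx.
by have := nvals_le (A_mono i0); lia.
Qed.

(* An element of valuation [c - 1 - s_(i-1)] multiplies [R_i] into [t^c Rbar] but sends an
   element of valuation [s_(i-1)] to the gap [c - 1]. *)
Lemma nvals_A_step_lt i : (0 < i <= n)%N -> (nvals v c (A i.-1) < nvals v c (A i))%N.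
Proof.
case/andP=> i0 i_n; have i'_n : (i.-1 <= n)%N by apply: leq_trans (leq_pred i) i_n.
have [x' [Sx' x'i]] := sval_exists i.-1; have [x [Sx xi]] := sval_exists i.
have x'c : (x' < c)%N by apply: (@ltn_of_nbelow S); rewrite x'i; case: i i0 i_n {x'i xi i'_n}.
have x'x : (x' < x)%N by apply: (@ltn_of_nbelow S); rewrite x'i xi prednK.
apply: (nvals_lt ai (sandwiched_A i'_n) (sandwiched_A i_n) (A_mono i0)).
have [y [y0 vy]] := dval_surj hv (c.-1 - x')%N; exists y; split.
  move=> a /(RsubE Sx xi) [Ra [->|va]]; first by rewrite mulr0; apply: sr0 hs.
  apply: cR; have [->|a0] := eqVneq a 0; first by left; rewrite mulr0.
  by right; rewrite (dvalM hv) // vy; lia.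
have [xx [Rxx [xx0 vxx]]] := Sx'.
move=> /(_ xx) Ayxx; apply: (conductor_pred hc c0); exists (y * xx); split.
  by apply: Ayxx; apply/(RsubE Sx' x'i); split=> //; right; rewrite vxx.
by rewrite mulf_neq0 // (dvalM hv) // vy vxx; split=> //; lia.
Qed.

Lemma type_count : typ = count (fun k => `[< valR M v k >] && ~~ `[< S k >]) (iota 0 c).
Proof.
rewrite /nvals /nbelow (count_split (P := fun k => `[< S k >])) ?addKn // => k _ /asboolP Sk.
by apply/asboolP; apply: valR_sub Sk; apply: ring_sub_M.
Qed.

Lemma valR_M_ge k : (c - e <= k)%N -> valR M v k.
Proof.
move=> ck; have [y [y0 vy]] := dval_surj hv k; exists y; split=> // a ma.
have [->|a0] := eqVneq a 0; first by rewrite mulr0; apply: sr0 hs.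
have [k' [vk Sk']] := ring_val_nat ai ma.1 a0.
have : (e <= k')%N by case: he => _ [_]; apply=> //; have := maxideal_val_ge1 ai ma a0; lia.
by move=> ek; apply: cR; right; rewrite (dvalM hv) // vy vk; lia.
Qed.

Lemma valR_A_ge i x k : S x -> nbelow S x = i -> (c <= x + k)%N -> valR (A i) v k.
Proof.
move=> Sx xi ck; have [y [y0 vy]] := dval_surj hv k; exists y; split=> //.
move=> a /(RsubE Sx xi) [Ra [->|va]]; first by rewrite mulr0; apply: sr0 hs.
apply: cR; have [->|a0] := eqVneq a 0; first by left; rewrite mulr0.
by right; rewrite (dvalM hv) // vy; lia.
Qed.

(* The values of [A i] contain [0] and everything from [c - s_i] on. *)
Lemma nvals_A_ge i x : S x -> nbelow S x = i -> (x < c)%N -> (c - nvals v c (A i) <= (c - x).-1)%N.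
Proof.
move=> Sx xi xc; rewrite /nvals nbelow_compl.
apply: leq_trans (sub_in_count (Q := fun k => 1 <= k < c - x)%N _) _; last by rewrite count_itv; lia.
move=> k _ /negP nAk; apply/andP; split.
  case: k nAk => // nA0; case: nA0; apply/asboolP; apply: (valR_sub (@ring_sub_A i)); exact: valR0 ai.
by rewrite ltnNge; apply/negP => ck; apply: nAk; apply/asboolP; apply: (valR_A_ge Sx xi); lia.
Qed.

Lemma conductor_le_type : (c <= n + n * typ)%N.
Proof. by have := telescope_le nvals_A_step_le (leqnn n); rewrite nvals_An nvals_A0. Qed.

Lemma conductor_eq_stepsP : c = (n + n * typ)%N <->
  (forall i, (0 < i <= n)%N -> nvals v c (A i) = (nvals v c (A i.-1) + typ)%N).
Proof. by rewrite -(telescope_eqP nvals_A_step_le) nvals_An nvals_A0. Qed.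

Lemma type_gt0 : (0 < typ)%N.
Proof.
rewrite type_count -has_count; apply/hasP; exists c.-1; first by rewrite mem_iota; lia.
apply/andP; split.
  by apply/asboolP; apply: valR_M_ge; have := e_gt0; lia.
by apply/negP => /asboolP; apply: conductor_pred.
Qed.

Lemma valR_M_addn k : valR M v k -> S (k + e).
Proof.
move=> [y [My [y0 vy]]]; have [[u [Ru [u0 vu]]] [e0 _]] := he.
have mu : maxideal R u by apply: (maxideal_of_val ai) => //; right; rewrite vu; lia.
have Ryu : R (y * u) by apply: My.
by exists (y * u); split=> //; rewrite mulf_neq0 // (dvalM hv) // vy vu.
Qed.

Lemma type_stair p : stair_shape S e p -> typ = (e - 1)%N.
Proof.
move=> shapeS; have e1 := stair_e_gt1 hc c0 e_gt0 shapeS.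
have cE := stair_conductor hc c0 e_gt0 shapeS; have nE := stair_nbelow hc c0 e_gt0 shapeS.
apply/eqP; rewrite eqn_leq; apply/andP; split; last first.
  have : (p.+1 * e <= p.+1 * typ.+1)%N by rewrite mulnS -cE -nE conductor_le_type.
  by rewrite leq_pmul2l //; lia.
rewrite type_count.
apply: leq_trans (sub_in_count (Q := fun k => c - e < k < c)%N _) _; last by rewrite count_itv; lia.
move=> k; rewrite mem_iota => /andP [_ kc] /andP [/asboolP Mk /negP nSk]; rewrite kc andbT.
rewrite ltnNge; apply/negP => kce; apply: nSk; apply/asboolP/shapeS; left.
have /shapeS [[j [jp jE]]|] := valR_M_addn Mk.
  by exists j.-1; split; [lia|case: j jp jE => [|j] _ /=; rewrite ?mul0n ?mulSn; lia].
by exists p; split=> //; move: cE; rewrite mulSn; lia.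
Qed.

Lemma conductor_eq_stair p : stair_shape S e p -> c = (n + n * typ)%N.
Proof.
move=> shapeS.
rewrite (type_stair shapeS) (stair_nbelow hc c0 e_gt0 shapeS) (stair_conductor hc c0 e_gt0 shapeS).
by rewrite addnC -mulnSr subn1 prednK //; apply: e_gt0.
Qed.

Lemma conductor_eq_gorenstein : typ = 1%N -> c = (n + n * typ)%N.
Proof.
move=> typ1; apply/conductor_eq_stepsP => i hi.
by have := nvals_A_step_le hi; have := nvals_A_step_lt hi; rewrite typ1; lia.
Qed.

Section LastElement.
Variable s : nat.
Hypotheses (Ss : S s) (sn : nbelow S s = n.-1).

Let n_gt0 : (0 < n)%N. Proof. exact: nbelow_lt (valR0 ai) c0. Qed.

Let sc : (s < c)%N. Proof. by apply: (@ltn_of_nbelow S); rewrite sn; lia. Qed.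

Lemma last_sval_max z : S z -> (s < z)%N -> (c <= z)%N.
Proof. by move=> Sz; apply: nbelow_next Ss Sz _; rewrite sn prednK. Qed.

Lemma last_sval_ge : (c - e <= s)%N.
Proof.
have lt : (c.-1 %/ e * e < c)%N by have := e_gt0; lia.
have : (c.-1 %/ e * e <= s)%N.
  by rewrite leqNgt; apply/negP => /(last_sval_max (valRMn ai (c.-1 %/ e) he.1)); rewrite leqNgt lt.
by have := e_gt0; lia.
Qed.

Let gap_in_M k : (s < k < c)%N -> `[< valR M v k >] && ~~ `[< S k >].
Proof.
case/andP=> sk kc; apply/andP; split.
  by apply/asboolP; apply: valR_M_ge; have := last_sval_ge; lia.
by apply/negP => /asboolP /last_sval_max /(_ sk); rewrite leqNgt kc.
Qed.

Lemma type_ge_last : (c - s.+1 <= typ)%N.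
Proof.
rewrite type_count -(count_itv (a := s.+1) (b := c) (c := c)) ?sc ?leqnn //.
by apply: sub_in_count => k _; apply: gap_in_M.
Qed.

Hypothesis full : c = (n + n * typ)%N.

Lemma type_le_last : (typ <= c - s.+1)%N.
Proof.
have := nvals_A_ge Ss sn sc; have := (proj1 conductor_eq_stepsP full) n.
by rewrite nvals_An n_gt0 leqnn => /(_ isT); lia.
Qed.

Lemma window_sval k : (c - e <= k <= s)%N -> S k.
Proof.
case/andP=> ek ks; case: (EM (S k)) => // nSk.
move: ks; rewrite leq_eqVlt => /orP [/eqP -> //|ks].
suff : (c - s.+1 < typ)%N by have := type_le_last; lia.
rewrite type_count -(count_itv (a := s.+1) (b := c) (c := c)) ?sc ?leqnn //.
apply: sub_in_count_lt => [j _|]; first exact: gap_in_M.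
exists k; split; [by rewrite mem_iota; lia| |by rewrite negb_and -leqNgt (ltnW ks)].
by apply/andP; split; [apply/asboolP; apply: valR_M_ge|apply/negP => /asboolP].
Qed.

(* If [s > c - e], then [s - 1] is [s_(n-2)] and the two top steps give [2 typ <= c - s], which
   together with [typ = c - s - 1] forces [typ = 1]. *)
Lemma last_sval_eq : typ != 1%N -> s = (c - e)%N.
Proof.
move/eqP=> typ1; apply/eqP; rewrite eqn_leq last_sval_ge andbT leqNgt; apply/negP => lt.
have Ss1 : S s.-1 by apply: window_sval; lia.
have := nbelowS S s.-1; rewrite prednK ?sn; last lia.
case: asboolP => // _ sn'; have sn1 : nbelow S s.-1 = n.-2 by lia.
have /(proj1 conductor_eq_stepsP full) Fn : (0 < n <= n)%N by rewrite n_gt0 leqnn.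
have /(proj1 conductor_eq_stepsP full) Fn1 : (0 < n.-1 <= n)%N by rewrite leq_pred andbT; lia.
have s1c : (s.-1 < c)%N by lia.
have := nvals_A_ge Ss1 sn1 s1c; rewrite nvals_An in Fn.
have := type_le_last; have := type_ge_last; have := type_gt0.
by lia.
Qed.

End LastElement.

Lemma stair_of_conductor_eq : c = (n + n * typ)%N -> typ = 1%N \/ exists p, stair_shape S e p.
Proof.
move=> full; have [typ1|typ1] := eqVneq typ 1%N; [by left|right].
have [s [Ss sn]] := sval_exists n.-1; have sE := last_sval_eq Ss sn full typ1.
exists (c.-1 %/ e)%N; apply: (stair_of_gap (valR0 ai) (valRD ai) hc c0 he.1 e_gt0 e_le_c).
  by rewrite -sE.
by move=> k /andP [lo hi] /(last_sval_max Ss sn); rewrite sE => /(_ lo); rewrite leqNgt hi.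
Qed.

Lemma gorenstein_or_stairP : (typ = 1%N \/ exists p, stair_shape S e p) <-> c = (n + n * typ)%N.
Proof.
split=> [[/conductor_eq_gorenstein|[p /conductor_eq_stair]] //|]; exact: stair_of_conductor_eq.
Qed.

Lemma type_sequenceP :
  (forall i, (0 < i <= n)%N -> length_eq R (A i.-1) (A i) typ) <-> c = (n + n * typ)%N.
Proof.
have len i : (0 < i <= n)%N -> length_eq R (A i.-1) (A i) (nvals v c (A i) - nvals v c (A i.-1)).
  case/andP=> i0 i_n; have i'_n : (i.-1 <= n)%N by apply: leq_trans (leq_pred i) i_n.
  exact (length_eq_nvals ai (sandwiched_A i'_n) (sandwiched_A i_n) (@A_mono i i0)).
rewrite conductor_eq_stepsP; split=> steps i hi.
  by have := length_eq_uniq (steps i hi) (len i hi); have := nvals_A_step_lt hi; lia.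
by have := len i hi; rewrite steps // addKn.
Qed.

End Conductor.

Theorem theorem3p1 (K : fieldType) (R : K -> Prop) (v : K -> int)
    (c delta r e : nat) :
  subring R ->
  is_quotient_field R ->
  is_local R ->
  noetherian R ->
  krull_dim_one R ->
  ~ regular R ->
  (* analytically irreducible: intcl R is a DVR with normalized valuation v,
     and a finite R-module *)
  normalized_dvaluation v ->
  (forall x, intcl R x <-> (x = 0 \/ 0 <= v x)) ->
  (exists s : seq K, forall x, intcl R x <-> rspan R s x) ->
  (* residually rational *)
  (forall x, intcl R x -> exists a, R a /\ (x - a = 0 \/ 1 <= v (x - a))) ->
  is_conductor (valR R v) c ->
  length_eq R R (intcl R) delta ->
  length_eq R R (colon R (maxideal R)) r ->
  is_multiplicity (valR R v) e ->
  let b : int := ((c%:Z - delta%:Z) * r%:Z - delta%:Z)%R in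
  let cond2 := r = 1%N \/
      exists p : nat, forall m : nat, valR R v m <->
        ((exists k, (k <= p)%N /\ m = (k * e)%N) \/ ((p.+1 * e) <= m)%N) in
  let cond3 := forall i : nat, (1 <= i <= c - delta)%N ->
      length_eq R (colon R (Rsub R v i.-1)) (colon R (Rsub R v i)) r in
  (b = 0 <-> cond2) /\ (b = 0 <-> cond3).
Proof.
move=> hs hq _ _ _ nreg hv hic hfin hres hc hdelta hr he b cond2 cond3.
have ai : ai_ring R v := AIRing hs hv hic hres.
have cR := conductor_sub ai hc (exists_val_ideal_sub ai hq hfin).
have c0 := conductor_gt0 ai cR nreg.
have hintcl : sandwiched R v c (intcl R).
  by apply: sandwiched_ext (sandwiched_vring c ai) => x; exact: iff_sym (hic x).
have deltaE : delta = (c - nbelow (valR R v) c)%N.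
  have RI x : R x -> intcl R x by move/(ring_val_ge0 ai)/hic.
  have := length_eq_nvals ai (sandwiched_ring ai cR) hintcl RI.
  by rewrite (nvals_ext (I := val_ideal v 0) hic) (nvals_vring c ai); apply: length_eq_uniq hdelta.
have rE := length_eq_uniq hr
  (length_eq_nvals ai (sandwiched_ring ai cR) (sandwiched_M ai hc cR c0) (@ring_sub_M _ _ _ ai)).
have n_le_c : (nbelow (valR R v) c <= c)%N by rewrite -[X in (_ <= X)%N](size_iota 0 c) count_size.
have bE : b = 0 <-> c = (nbelow (valR R v) c + nbelow (valR R v) c * r)%N.
  rewrite /b deltaE; move: n_le_c; set n := nbelow _ _ => nc.
  have -> : (c%:Z - (c - n)%N%:Z) = n%:Z by lia.
  by rewrite -PoszM; split; lia.
rewrite /cond2 /cond3 deltaE subKn // bE rE.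
split; first exact: iff_sym (gorenstein_or_stairP ai hc cR c0 he).
exact: iff_sym (type_sequenceP ai hc cR c0).
Qed.
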